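(* Let $w$ be a finite balanced word over $\Sigma=\{a,b\}$. Then for any integer $k>0$, $P(w)\equiv(0,0)\pmod k$ (i.e., both $|w|_a$ and $|w|_b$ are divisible by $k$) if and only if $w$ is an abelian $k$-power.
   Context: $|w|_x$ is the number of occurrences of letter $x$ in $w$, and $P(w)=(|w|_a,|w|_b)$ is the Parikh vector. A word $w$ over $\{a,b\}$ is balanced if for any two factors $u,v$ of $w$ of the same length, $\big||u|_a-|v|_a\big|\leq 1$. An abelian $k$-power is a word of the form $v_1v_2\cdots v_k$ where all $v_i$ have the same Parikh vector. *)

From HB Require Import structures.
From mathcomp Require Import all_boot.
Set Implicit Arguments. Unset Strict Implicit. Unset Printing Implicit Defensive.

Inductive letter := la | lb.

Definition letter_eqb (x y : letter) : bool :=
  match x, y with la, la | lb, lb => true | _, _ => false end.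
Lemma letter_eqP : Equality.axiom letter_eqb.
Proof. by case; case; constructor. Qed.
HB.instance Definition _ := hasDecEq.Build letter letter_eqP.

Definition word := seq letter.

Definition occ (x : letter) (w : word) : nat := count_mem x w.

Definition parikh (w : word) : nat * nat := (occ la w, occ lb w).

Definition factor (u w : word) : bool := infix u w.

Definition balanced (w : word) : Prop :=
  forall u v : word, factor u w -> factor v w -> size u = size v ->
    occ la u <= occ la v + 1 /\ occ la v <= occ la u + 1.

Definition abelian_power (k : nat) (w : word) : Prop :=
  exists vs : seq word, [/\ size vs = k, w = flatten vs &
    forall i j, i < k -> j < k -> parikh (nth [::] vs i) = parikh (nth [::] vs j)].

From mathcomp Require Import all_boot.
From mathcomp Require Import zify.

Set Implicit Arguments.
Unset Strict Implicit.

(* If P(w) = k (p, q), cut w into k consecutive blocks of length p + q.  The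
   numbers of a's in these blocks differ by at most one (w is balanced) and
   average to p, so they all equal p, and each block has Parikh vector (p, q).
   Conversely, the Parikh vector of an abelian k-power is k times that of any
   of its blocks. *)

Lemma occ_la_add_lb (u : word) : occ la u + occ lb u = size u.
Proof. by elim: u => //= -[] u IH; rewrite /occ /= in IH *; lia. Qed.

Section NearlyConstantSum.

Implicit Types (s : seq nat) (p : nat).

Lemma leq_size_mul_sumn s p : all (leq p) s -> size s * p <= sumn s.
Proof. by elim: s => //= x s IH /andP [px /IH]; lia. Qed.

Lemma leq_sumn_size_mul s p : all (geq p) s -> sumn s <= size s * p.
Proof. by elim: s => //= x s IH /andP [xp /IH]; lia. Qed.

Lemma sumn_spread1_const s p :
  sumn s = size s * p -> {in s &, forall x y, x <= y.+1} -> {in s, forall x, x = p}.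
Proof.
move=> sum_s spread x xs.
have perm_s := perm_to_rem xs.
have size_s := perm_size perm_s; have sumn_s := perm_sumn perm_s.
rewrite /= in size_s sumn_s.
have [px | xp] := ltnP p x.
  have /leq_size_mul_sumn : all (leq p) (rem x s).
    by apply/allP => y /mem_rem ys; have := spread x y xs ys; lia.
  lia.
move: xp; rewrite leq_eqVlt => /predU1P [// | xp].
have /leq_sumn_size_mul : all (geq p) (rem x s).
  by apply/allP => y /mem_rem ys /=; have := spread y x ys xs; lia.
lia.
Qed.

End NearlyConstantSum.

Section Blocks.

Variable T : eqType.
Implicit Types (s u : seq T) (ss : seq (seq T)).

Lemma infix_flatten ss u : u \in ss -> infix u (flatten ss).
Proof.
elim: ss => //= v ss IH; rewrite inE => /predU1P [-> | /IH].
  exact/infix_catr/infix_refl.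
exact: infix_catl.
Qed.

Lemma count_flatten_const (P : pred T) ss c :
  {in ss, forall u, count P u = c} -> count P (flatten ss) = size ss * c.
Proof.
elim: ss => //= u ss IH count_c.
rewrite count_cat count_c ?mem_head // IH ?mulSn // => v vs.
by apply: count_c; rewrite inE vs orbT.
Qed.

Variables (k m : nat) (s : seq T).
Hypothesis size_s : size s = k * m.

Lemma flatten_reshape_nseq : flatten (reshape (nseq k m) s) = s.
Proof. by rewrite reshapeKr // sumn_nseq size_s mulnC. Qed.

Lemma size_reshape_nseq u : u \in reshape (nseq k m) s -> size u = m.
Proof.
move=> us; have : size u \in shape (reshape (nseq k m) s) by exact: map_f.
by rewrite reshapeKl ?sumn_nseq ?size_s 1?mulnC // mem_nseq => /andP [_ /eqP].
Qed.

End Blocks.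

Lemma abelian_power_of_dvdn (w : word) (k : nat) :
  balanced w -> k %| occ la w -> k %| occ lb w -> abelian_power k w.
Proof.
move=> bal /dvdnP [p occ_a] /dvdnP [q occ_b].
have size_w : size w = k * (p + q) by rewrite -occ_la_add_lb occ_a occ_b; lia.
set vs := reshape (nseq k (p + q)) w.
have flat_vs : flatten vs = w := flatten_reshape_nseq size_w.
have size_vs : size vs = k by rewrite size_reshape size_nseq.
have factor_vs u : u \in vs -> factor u w by rewrite -flat_vs; exact: infix_flatten.
have occ_a_vs : {in vs, forall u, occ la u = p}.
  move=> u us; apply: (sumn_spread1_const (s := map (occ la) vs)) (map_f _ us).
    by rewrite size_map size_vs -count_flatten flat_vs -/(occ la w) occ_a mulnC.
  move=> _ _ /mapP [u1 u1s ->] /mapP [u2 u2s ->].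
  have [+ _] := bal u1 u2 (factor_vs u1 u1s) (factor_vs u2 u2s)
    (etrans (size_reshape_nseq size_w u1s) (esym (size_reshape_nseq size_w u2s))).
  lia.
have parikh_vs : {in vs, forall u, parikh u = (p, q)}.
  move=> u us; rewrite /parikh occ_a_vs //; congr pair.
  by have := occ_la_add_lb u; rewrite (size_reshape_nseq size_w us) occ_a_vs //; lia.
exists vs; split => // i j ik jk.
by rewrite !parikh_vs // mem_nth // size_vs.
Qed.

Lemma dvdn_occ_abelian_power (w : word) (k : nat) (x : letter) :
  abelian_power k w -> k %| occ x w.
Proof.
case=> vs [size_vs -> parikh_vs].
have occ_vs : {in vs, forall u, count_mem x u = occ x (nth [::] vs 0)}.
  move=> u us; have ik : index u vs < k by rewrite -size_vs index_mem.
  have := parikh_vs _ _ ik (leq_ltn_trans (leq0n _) ik).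
  by rewrite nth_index // /parikh; case: x => -[].
by rewrite /occ (count_flatten_const occ_vs) size_vs dvdn_mulr.
Qed.

Theorem lemma4 (w : word) (k : nat) :
  balanced w -> 0 < k ->
  ((k %| occ la w) && (k %| occ lb w) <-> abelian_power k w).
Proof.
move=> bal _; split.
  by case/andP; exact: abelian_power_of_dvdn bal.
by move=> pow; rewrite !(dvdn_occ_abelian_power _ pow).
Qed.
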